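(* Let $L_r^n\subset\mathbb{A}^n$ be the cone over $r$ points of $\mathbb{P}^{n-1}$ in general position. Then for every integer $\ell>0$ \[\dim_\k T^1_\ell\ \ge\ \max\Big\{0,\ (n-1)\Big(r-\binom{n+\ell}{\ell+1}\Big)-\binom{n+\ell-1}{\ell+1}\Big\}.\]
   Context: Ground field $\k$ algebraically closed, characteristic $0$. A set of $r$ points in $\mathbb{P}^{n-1}$ is in general position if for every $\ell\ge1$ it imposes $\min(r,\binom{n+\ell-1}{\ell})$ independent conditions on forms of degree $\ell$. $T^1=\operatorname{Coker}\big(\Theta_n\otimes\mathcal{O}\to\operatorname{Hom}_{\mathcal{O}_n}(I,\mathcal{O})\big)$ for the homogeneous ideal $I$ of $L_r^n$ (all variables of weight $1$), graded so that $T^1_\ell$ is the image of homomorphisms sending each homogeneous generator of degree $q$ to an element of degree $q+\ell$. *)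

From HB Require Import structures.
From mathcomp Require Import all_boot all_order all_algebra.
From mathcomp Require Import mpoly.
Set Implicit Arguments. Unset Strict Implicit. Unset Printing Implicit Defensive.
Import Order.TTheory GRing.Theory Num.Theory.
Local Open Scope ring_scope.

Section Cone.
Variables (k : fieldType) (n r : nat).
(* points of P^{n-1}, given by (nonzero) representatives in k^n *)
Variable P : 'I_r -> 'rV[k]_n.

Definition evalAt (v : 'rV[k]_n) (f : {mpoly k[n]}) : k :=
  meval (fun j => v 0 j) f.

(* the ideal I of the cone L = union of the lines through the points P i *)
Definition inConeIdeal (f : {mpoly k[n]}) : Prop :=
  forall (i : 'I_r) (t : k), evalAt (t *: P i) f = 0.

(* the points impose exactly s independent conditions on forms of degree l:
   the image of the evaluation map (forms of degree l) -> k^r has dimension s *)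
Definition imposes_conditions (l s : nat) : Prop :=
  exists B : 'M[k]_(s, r),
    [/\ row_free B,
        (forall i : 'I_s, exists f : {mpoly k[n]},
            f \is l.-homog /\ row i B = \row_(j < r) evalAt (P j) f)
      & (forall f : {mpoly k[n]}, f \is l.-homog ->
            (\row_(j < r) evalAt (P j) f <= B)%MS)].

Definition general_position : Prop :=
  [/\ (forall i, P i != 0),
      (forall i j, i != j -> forall c : k, P i != c *: P j)
    & (forall l : nat, (0 < l)%N -> imposes_conditions l (minn r 'C(n + l - 1, l)))].

(* a function phi : I -> O = S/I given by representatives in S (values on I
   matter only, and only modulo I) is an S-module homomorphism *)
Definition isHomIO (phi : {mpoly k[n]} -> {mpoly k[n]}) : Prop :=
  forall f g a b : {mpoly k[n]}, inConeIdeal f -> inConeIdeal g ->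
    inConeIdeal (phi (a * f + b * g) - (a * phi f + b * phi g)).

Definition homDeg (l : nat) (phi : {mpoly k[n]} -> {mpoly k[n]}) : Prop :=
  forall (q : nat) (f : {mpoly k[n]}), inConeIdeal f -> f \is q.-homog ->
    exists h : {mpoly k[n]}, h \is (q + l)%N.-homog /\ inConeIdeal (phi f - h).

Definition derivApply (g : 'I_n -> {mpoly k[n]}) (f : {mpoly k[n]}) : {mpoly k[n]} :=
  \sum_(i < n) g i * mderiv i f.

(* dim_k T^1_l >= m: there are m homomorphisms I -> O of degree l whose classes
   modulo the image of the degree-l derivations (Theta_n (x) O)_l are linearly
   independent *)
Definition T1_dim_ge (l m : nat) : Prop :=
  exists phi : 'I_m -> {mpoly k[n]} -> {mpoly k[n]},
    (forall j, isHomIO (phi j) /\ homDeg l (phi j)) /\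
    (forall (c : 'I_m -> k) (g : 'I_n -> {mpoly k[n]}),
       (forall i, g i \is (l + 1)%N.-homog) ->
       (forall f, inConeIdeal f ->
          inConeIdeal (\sum_(j < m) c j *: phi j f - derivApply g f)) ->
       forall j, c j = 0).
End Cone.

From HB Require Import structures.
From mathcomp Require Import all_boot all_order all_algebra.
From mathcomp Require Import mpoly.
From mathcomp Require Import zify.
From Stdlib Require Import IndefiniteDescription.
Import Order.TTheory GRing.Theory Num.Theory.
Local Open Scope ring_scope.
Set Implicit Arguments. Unset Strict Implicit. Unset Printing Implicit Defensive.

(* A matrix [W] with rows [w_i] gives a homomorphism [I -> O] of degree [l]: send [f] to
   [\sum_q \sum_i (D_(w_i) f_q)(P_i) F_(q+l,i)], where [f_q] are the homogeneous components
   of [f] and [F_(d,i)] are forms of degree [d] with [F_(d,i)(P_j) = delta_ij]; these exist in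
   every degree in which some element of [I] has a nonzero component, and then the
   homomorphism agrees with [t^(l+1) D_(w_i) f] on the line through [P_i].  If a combination
   of such homomorphisms is induced by a derivation [\sum_j g_j d/dx_j] of degree [l], every
   row of the combined matrix differs from [(g_j(P_i))_j] by a multiple of [P_i]: the matrix
   lies in the span of the values of [n]-tuples of forms of degree [l+1] and of the radial
   matrices [diag(a) P].  With [s_d = min(r, C(n+d-1, d))] the number of conditions imposed
   in degree [d], that span has dimension at most [s_(l+1) n + r - s_l], since the radial
   matrices with [a] the values of a form of degree [l] are counted twice; a complement of
   it gives the independent classes. *)

Section Evaluation.
Variables (k : fieldType) (n : nat).
Implicit Types (v : 'rV[k]_n) (f g : {mpoly k[n]}).

Lemma evalAtD v f g : evalAt v (f + g) = evalAt v f + evalAt v g.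
Proof. exact: mevalD. Qed.

Lemma evalAtB v f g : evalAt v (f - g) = evalAt v f - evalAt v g.
Proof. exact: mevalB. Qed.

Lemma evalAtM v f g : evalAt v (f * g) = evalAt v f * evalAt v g.
Proof. exact: mevalM. Qed.

Lemma evalAtZ v c f : evalAt v (c *: f) = c * evalAt v f.
Proof. exact: mevalZ. Qed.

Lemma evalAt0 v : evalAt v (0 : {mpoly k[n]}) = 0.
Proof. exact: meval0. Qed.

Lemma evalAtC v c : evalAt v (c%:MP : {mpoly k[n]}) = c.
Proof. exact: mevalC. Qed.

Lemma evalAtX v j : evalAt v ('X_j : {mpoly k[n]}) = v 0 j.
Proof. exact: mevalXU. Qed.

Lemma evalAt_sum v (I : finType) (Q : pred I) (F : I -> {mpoly k[n]}) :
  evalAt v (\sum_(i | Q i) F i) = \sum_(i | Q i) evalAt v (F i).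
Proof. exact: raddf_sum. Qed.

Lemma evalAt_prod v (I : finType) (Q : pred I) (F : I -> {mpoly k[n]}) :
  evalAt v (\prod_(i | Q i) F i) = \prod_(i | Q i) evalAt v (F i).
Proof. exact: rmorph_prod. Qed.

Lemma evalAt_homog q f t v : f \is q.-homog -> evalAt (t *: v) f = t ^+ q * evalAt v f.
Proof.
move=> /dhomogP f_q; rewrite /evalAt !mevalE mulr_sumr big_seq [RHS]big_seq.
apply: eq_bigr => m m_f; rewrite mulrCA; congr (_ * _).
under eq_bigr do rewrite mxE exprMn.
by rewrite big_split /= prodrXr -mdegE f_q.
Qed.

Lemma pihomog_msize q f : (msize f <= q)%N -> pihomog mdeg q f = 0.
Proof.
move=> le_f_q; rewrite pihomogE big_seq_cond big_pred0 // => m.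
apply/negbTE/negP => /andP[m_f /eqP deg_m]; have := msize_mdeg_lt m_f.
by rewrite deg_m ltnNge le_f_q.
Qed.

Lemma evalAt_decomp t v f :
  evalAt (t *: v) f = \sum_(d < msize f) t ^+ d * evalAt v (pihomog mdeg d f).
Proof.
rewrite {1}(pihomog_partitionE (leqnn (msize f))) evalAt_sum.
by apply: eq_bigr => d _; rewrite (evalAt_homog _ _ (pihomogP _ _ _)).
Qed.

End Evaluation.

Lemma pchar0_natr_inj (R : idomainType) : [pchar R] =i pred0 -> injective (fun j : nat => j%:R : R).
Proof.
move=> /(pcharf0P R) R0 a b; wlog le_ab : a b / (a <= b)%N => [W|] /= eq_ab.
  by have [/W->|/ltnW/W->] := leqP a b.
apply/eqP; rewrite eqn_leq le_ab /= -subn_eq0 -R0 natrB // eq_ab subrr //.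
Qed.

Section ConeIdeal.
Variables (k : fieldType) (n r : nat) (P : 'I_r -> 'rV[k]_n).
Implicit Types (f g a : {mpoly k[n]}).

Lemma inConeIdeal0 : inConeIdeal P 0.
Proof. by move=> i t; rewrite evalAt0. Qed.

Lemma inConeIdealD f g : inConeIdeal P f -> inConeIdeal P g -> inConeIdeal P (f + g).
Proof. by move=> If Ig i t; rewrite evalAtD If Ig addr0. Qed.

Lemma inConeIdealMl a f : inConeIdeal P f -> inConeIdeal P (a * f).
Proof. by move=> If i t; rewrite evalAtM If mulr0. Qed.

(* [f (t P i) = \sum_d t^d f_d (P i)] is a polynomial in [t] vanishing at every [t], in
   particular at the distinct [0, 1, 2, ...] of characteristic 0. *)
Lemma inConeIdeal_pihomog q f : [pchar k] =i pred0 ->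
  inConeIdeal P f -> inConeIdeal P (pihomog mdeg q f).
Proof.
move=> char0 If i t; rewrite (evalAt_homog _ _ (pihomogP _ _ _)).
have [lt_q_f|le_f_q] := ltnP q (msize f); last by rewrite pihomog_msize // evalAt0 mulr0.
pose p := \poly_(d < msize f) evalAt (P i) (pihomog mdeg d f).
suff /(congr1 (fun s : {poly k} => s`_q)) : p = 0.
  by rewrite coef_poly lt_q_f coef0 => ->; rewrite mulr0.
apply/eqP/contraT => p_neq0.
have roots_p : all (root p) [seq j%:R | j <- iota 0 (msize f)].
  apply/allP => _ /mapP[j _ ->]; rewrite /root horner_poly; apply/eqP.
  transitivity (evalAt (j%:R *: P i) f); last exact: If.
  rewrite evalAt_decomp; apply: eq_bigr => d _; exact: mulrC.
have uniq_nat : uniq [seq (j%:R : k) | j <- iota 0 (msize f)].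
  by rewrite map_inj_uniq ?iota_uniq // => a b; apply: (pchar0_natr_inj char0).
have := max_poly_roots p_neq0 roots_p uniq_nat.
by rewrite size_map size_iota ltnNge size_poly.
Qed.

End ConeIdeal.

Section DirectionalDerivative.
Variables (k : fieldType) (n : nat).
Implicit Types (u v : 'rV[k]_n) (f g : {mpoly k[n]}).

Definition dderiv u f : {mpoly k[n]} := \sum_(j < n) u 0 j *: mderiv j f.

Definition linform (c : 'cV[k]_n) : {mpoly k[n]} := \sum_(j < n) c j 0 *: 'X_j.

Lemma dderiv_sum u (I : finType) (F : I -> {mpoly k[n]}) :
  dderiv u (\sum_i F i) = \sum_i dderiv u (F i).
Proof.
rewrite /dderiv exchange_big /=; apply: eq_bigr => j _.
by rewrite -scaler_sumr; congr (_ *: _); exact: raddf_sum.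
Qed.

Lemma dderiv0 u : dderiv u 0 = 0.
Proof. by rewrite /dderiv big1 // => j _; rewrite mderiv0 scaler0. Qed.

Lemma dderivD u f g : dderiv u (f + g) = dderiv u f + dderiv u g.
Proof. by rewrite /dderiv -big_split; apply: eq_bigr => j _; rewrite mderivD scalerDr. Qed.

Lemma dderivM u f g : dderiv u (f * g) = dderiv u f * g + f * dderiv u g.
Proof.
rewrite /dderiv mulr_suml mulr_sumr -big_split; apply: eq_bigr => j _.
by rewrite mderivM scalerDr -scalerAl -scalerAr.
Qed.

Lemma dderiv_suml (I : finType) (c : I -> k) (w : I -> 'rV[k]_n) f :
  dderiv (\sum_i c i *: w i) f = \sum_i c i *: dderiv (w i) f.
Proof.
rewrite /dderiv; under eq_bigr do rewrite summxE scaler_suml.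
rewrite exchange_big; apply: eq_bigr => i _; rewrite scaler_sumr.
by apply: eq_bigr => j _; rewrite mxE scalerA.
Qed.

Lemma dderivBl u w f : dderiv (u - w) f = dderiv u f - dderiv w f.
Proof. by rewrite /dderiv -sumrB; apply: eq_bigr => j _; rewrite !mxE scalerBl. Qed.

Lemma dderiv_homog q u f : f \is q.-homog -> dderiv u f \is q.-1.-homog.
Proof.
move=> /dhomogP f_q; apply: rpred_sum => j _; apply: rpredZ.
apply/dhomogP => m; rewrite mcoeff_msupp mcoeff_deriv.
have [->|m_f] := eqVneq f@_(m + U_(j))%MM 0; first by rewrite mul0rn eqxx.
move=> _; rewrite -(f_q (m + U_(j))%MM); last by rewrite mcoeff_msupp.
by rewrite /= mdegD mdeg1 addn1.
Qed.

Lemma dderiv_homog0 u f : f \is 0.-homog -> dderiv u f = 0.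
Proof.
move=> f_0; rewrite /dderiv big1 // => j _; apply/eqP; rewrite scaler_eq0; apply/orP; right.
apply/eqP/mpolyP => m; rewrite mcoeff_deriv mcoeff0 (dhomog_nemf_coeff f_0) ?mul0rn //.
by rewrite /= mdegD mdeg1 addn1.
Qed.

Lemma evalAt_dderiv v u f :
  evalAt v (dderiv u f) = \sum_(j < n) u 0 j * evalAt v (mderiv j f).
Proof. by rewrite evalAt_sum; apply: eq_bigr => j _; rewrite evalAtZ. Qed.

Lemma evalAt_derivApply v (g : 'I_n -> {mpoly k[n]}) f :
  evalAt v (derivApply g f) = evalAt v (dderiv (\row_j evalAt v (g j)) f).
Proof.
rewrite evalAt_dderiv evalAt_sum; apply: eq_bigr => j _.
by rewrite evalAtM mxE.
Qed.

Lemma evalAt_linform v c : evalAt v (linform c) = (v *m c) 0 0.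
Proof. by rewrite evalAt_sum mxE; apply: eq_bigr => j _; rewrite evalAtZ evalAtX mulrC. Qed.

Lemma evalAt_dderiv_linform v u c : evalAt v (dderiv u (linform c)) = (u *m c) 0 0.
Proof.
rewrite evalAt_dderiv mxE; apply: eq_bigr => j _; congr (_ * _).
rewrite raddf_sum evalAt_sum (bigD1 j) //= big1 => [|i ne_ij]; rewrite mderivZ mderivX mnm1E.
  have -> : (U_(j) - U_(j) = 0 :> 'X_{1..n})%MM by apply/mnmP => x; rewrite mnmBE mnm0E subnn.
  by rewrite eqxx mpolyX0 scale1r evalAtZ evalAtC mulr1 addr0.
by rewrite (negbTE ne_ij) scale0r scaler0 evalAt0.
Qed.

End DirectionalDerivative.

Lemma notsub_separating_col (k : fieldType) (n : nat) (u v : 'rV[k]_n) :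
  ~~ (u <= v)%MS -> exists c : 'cV[k]_n, v *m c = 0 /\ (u *m c) 0 0 != 0.
Proof.
rewrite submxE => uc_neq0.
have /existsP[j uc_j] : [exists j, (u *m cokermx v) 0 j != 0].
  apply: contraR uc_neq0 => /existsPn uc0; apply/eqP/rowP => j.
  by rewrite [RHS]mxE; apply/eqP/negPn/(uc0 j).
exists (col j (cokermx v)); rewrite !colE mulmxA mulmx_coker mul0mx.
by rewrite mulmxA -colE mxE.
Qed.

Section Points.
Variables (k : fieldType) (n r : nat) (P : 'I_r -> 'rV[k]_n).

Definition evalmx (g : 'I_n -> {mpoly k[n]}) : 'M[k]_(r, n) :=
  \matrix_(i, j) evalAt (P i) (g j).

Definition radialmx (a : 'rV[k]_r) : 'M[k]_(r, n) := \matrix_(i, j) (a 0 i * P i 0 j).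

(* If [u] is not a multiple of [P i], take linear forms [lam] with [lam (P i) = 0 <> lam u]
   and [mu j] with [mu j (P j) = 0 <> mu j (P i)]; then [lam * \prod_j mu j] lies in the
   ideal, but its derivative along [u] does not vanish at [P i]. *)
Lemma sub_of_dderiv_vanishing (i : 'I_r) (u : 'rV[k]_n) :
  (forall i j, i != j -> forall c : k, P i != c *: P j) ->
  (forall f, inConeIdeal P f -> evalAt (P i) (dderiv u f) = 0) -> (u <= P i)%MS.
Proof.
move=> distinct Du0; apply: contraT => /notsub_separating_col[lam [lam_Pi lam_u]].
have mu_ex j : exists c : 'cV[k]_n, j != i -> P j *m c = 0 /\ (P i *m c) 0 0 != 0.
  have [-> | ne_ji] := eqVneq j i; first by exists 0.
  have : ~~ (P i <= P j)%MS.
    apply/negP => /sub_rVP[a Pi_a].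
    by have := distinct i j; rewrite eq_sym ne_ji Pi_a => /(_ isT a); rewrite eqxx.
  by case/notsub_separating_col => c mu_c; exists c.
have [mu mu_P] := fin_all_exists mu_ex.
pose M := \prod_(j | j != i) linform (mu j).
have I_f : inConeIdeal P (linform lam * M).
  move=> j t; rewrite evalAtM; have [-> | ne_ji] := eqVneq j i.
    by rewrite evalAt_linform -scalemxAl lam_Pi scaler0 mxE mul0r.
  rewrite evalAt_prod (bigD1 j) //= [evalAt _ (linform (mu j))]evalAt_linform.
  by rewrite -scalemxAl (proj1 (mu_P j ne_ji)) scaler0 mxE !mul0r mulr0.
suff: evalAt (P i) (dderiv u (linform lam * M)) != 0 by rewrite Du0 ?eqxx.
rewrite dderivM evalAtD !evalAtM evalAt_linform lam_Pi mxE mul0r addr0.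
rewrite evalAt_dderiv_linform mulf_neq0 // evalAt_prod.
by apply/prodf_neq0 => j ne_ji; rewrite evalAt_linform; case: (mu_P j ne_ji).
Qed.

Lemma interpolating_forms d : imposes_conditions P d r ->
  exists F : 'I_r -> {mpoly k[n]}, (forall i, F i \is d.-homog) /\
    (forall i j, evalAt (P j) (F i) = (i == j)%:R).
Proof.
case=> B [B_free B_rows _]; have [h h_B] := fin_all_exists B_rows.
have B_unit : B \in unitmx by rewrite -row_free_unit.
exists (fun i => \sum_a invmx B i a *: h a); split => [i|i j].
  by apply: rpred_sum => a _; apply/rpredZ; case: (h_B a).
have -> : (i == j)%:R = (invmx B *m B) i j :> k by rewrite mulVmx // mxE.
rewrite evalAt_sum mxE; apply: eq_bigr => a _.
case: (h_B a) => _ /(congr1 (fun w : 'rV[k]_r => w 0 j)).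
by rewrite !mxE evalAtZ => ->.
Qed.

End Points.

Lemma homog_vanishing_eq0 (k : fieldType) (n r : nat) (P : 'I_r -> 'rV[k]_n.+1) d
    (h : {mpoly k[n.+1]}) :
  imposes_conditions P d 'C(n.+1 + d - 1, d) -> h \is d.-homog ->
  (forall i, evalAt (P i) h = 0) -> h = 0.
Proof.
set s := 'C(_, _); case=> B [B_free B_rows _] h_d h0.
have [fa fa_B] := fin_all_exists B_rows.
have coef0 (c : 'I_s -> k) :
    (forall j, evalAt (P j) (\sum_a c a *: fa a) = 0) -> forall a, c a = 0.
  move=> c0 a; suff /rowP/(_ a) : \row_a c a = 0 by rewrite !mxE.
  apply/eqP; rewrite -(mulmx_free_eq0 _ B_free); apply/eqP/rowP => j.
  rewrite [RHS]mxE -(c0 j) evalAt_sum mxE; apply: eq_bigr => b _; rewrite evalAtZ mxE.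
  by case: (fa_B b) => _ /(congr1 (fun w : 'rV[k]_r => w 0 j)); rewrite !mxE => ->.
pose X : s.-tuple (dhomog n.+1 k d) := [tuple DHomog (proj1 (fa_B a)) | a < s].
have X_fa (c : 'I_s -> k) : mpoly_of_dhomog (\sum_a c a *: X`_a) = \sum_a c a *: fa a.
  by rewrite raddf_sum; apply: eq_bigr => a _; rewrite -tnth_nth tnth_mktuple.
have X_basis : basis_of fullv X.
  have dim_s : 'C(d + n, d) = s by rewrite /s addSn subn1 addnC.
  rewrite basisEfree subvf dimvf size_tuple (eq_leq dim_s) !andbT.
  by apply/freeP => c Xc0; apply: coef0 => j; rewrite -X_fa Xc0 raddf0 evalAt0.
pose hv : dhomog n.+1 k d := DHomog h_d.
have h_fa : h = \sum_a coord X a hv *: fa a.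
  by rewrite -X_fa -coord_span // (span_basis X_basis) memvf.
have coord0 : forall a, coord X a hv = 0 by apply: coef0 => j; rewrite -h_fa h0.
by rewrite h_fa big1 // => a _; rewrite coord0 scale0r.
Qed.

Section GeneralPosition.
Variables (k : fieldType) (n r : nat) (P : 'I_r -> 'rV[k]_n).
Hypothesis gen_pos : general_position P.

Lemma interpolating_family :
  exists F : nat -> 'I_r -> {mpoly k[n]}, (forall d i, F d i \is d.-homog) /\
    (forall d, (0 < d)%N -> (r <= 'C(n + d - 1, d))%N ->
       forall i j, evalAt (P j) (F d i) = (i == j)%:R).
Proof.
case: gen_pos => _ _ imposes.
have /functional_choice[F F_spec] d : exists Fd : 'I_r -> {mpoly k[n]},
    (forall i, Fd i \is d.-homog) /\ ((0 < d)%N -> (r <= 'C(n + d - 1, d))%N ->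
       forall i j, evalAt (P j) (Fd i) = (i == j)%:R).
  have [/andP[d_gt0 r_le] | d_r] := boolP ((0 < d)%N && (r <= 'C(n + d - 1, d))%N).
    have := imposes d d_gt0; rewrite (minn_idPl r_le).
    by case/interpolating_forms => Fd [Fd_d Fd_P]; exists Fd.
  exists (fun _ => 0); split => [i | d_gt0 r_le]; first exact: dhomog0.
  by move: d_r; rewrite d_gt0 r_le.
by exists F; split => [d i | d]; [case: (F_spec d) | case: (F_spec d)].
Qed.

Lemma vanishing_form_bound d (h : {mpoly k[n]}) : (0 < d)%N -> h \is d.-homog -> h != 0 ->
  (forall i, evalAt (P i) h = 0) -> (r <= 'C(n + d - 1, d))%N.
Proof.
case: gen_pos => P_neq0 _ imposes d_gt0 h_d h_neq0 h0.
rewrite leqNgt; apply/negP => lt_C_r.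
have := imposes d d_gt0; rewrite (minn_idPr (ltnW lt_C_r)).
move: P P_neq0 h h_d h_neq0 h0 lt_C_r; case: n => [|n'] Q Q_neq0 h h_d h_neq0 h0 lt_C_r IC.
  by move: (Q_neq0 (Ordinal (leq_ltn_trans (leq0n _) lt_C_r))); rewrite thinmx0 eqxx.
by move: h_neq0; rewrite (homog_vanishing_eq0 IC h_d h0) eqxx.
Qed.

Lemma ideal_component_bound l q f : [pchar k] =i pred0 -> (0 < l)%N ->
  inConeIdeal P f -> pihomog mdeg q f != 0 -> (r <= 'C(n + (q + l) - 1, q + l))%N.
Proof.
move=> char0 l_gt0 If fq_neq0.
have [r0 | r_gt0] := posnP r; first by rewrite r0.
have n_gt0 : (0 < n)%N.
  case: gen_pos => P_neq0 _ _; case: (pickP (@predT 'I_n)) => [j _ | no_j].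
    exact: leq_ltn_trans (leq0n j) (ltn_ord j).
  have /eqP[] := P_neq0 (Ordinal r_gt0).
  by apply/rowP => j; have := no_j j.
pose x0 : {mpoly k[n]} := 'X_(Ordinal n_gt0).
apply: (@vanishing_form_bound _ (pihomog mdeg q f * x0 ^+ l)).
- by rewrite addn_gt0 l_gt0 orbT.
- apply: dhomogM; first exact: pihomogP.
  by rewrite -[X in X.-homog]mul1n dhomogMn // dhomogX /= mdeg1.
- rewrite mulf_neq0 // expf_neq0 //; apply/eqP => /(congr1 (mcoeff U_(Ordinal n_gt0))).
  by rewrite mcoeffX eqxx mcoeff0 => /eqP; rewrite oner_eq0.
move=> i; have := inConeIdeal_pihomog q char0 If i 1.
by rewrite scale1r evalAtM => ->; rewrite mul0r.
Qed.

End GeneralPosition.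

Definition evalSpan (k : fieldType) (n r s : nat) (B : 'M[k]_(s, r)) : 'M[k]_(s * n, r * n) :=
  lin_mx (mulmx B^T).
Arguments evalSpan {k} n {r s} B.

Section Spans.
Variables (k : fieldType) (n r : nat) (P : 'I_r -> 'rV[k]_n).

Lemma evalmx_sub_evalSpan d s (B : 'M[k]_(s, r)) (g : 'I_n -> {mpoly k[n]}) :
  (forall f, f \is d.-homog -> (\row_j evalAt (P j) f <= B)%MS) ->
  (forall j, g j \is d.-homog) -> (mxvec (evalmx P g) <= evalSpan n B)%MS.
Proof.
move=> B_span g_d.
have /fin_all_exists[y y_B] j : exists y : 'rV[k]_s, \row_i evalAt (P i) (g j) = y *m B.
  exact/submxP/B_span/g_d.
have -> : evalmx P g = B^T *m \matrix_(a, j) y j 0 a.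
  apply/matrixP => i j; rewrite !mxE; have := congr1 (fun w : 'rV[k]_r => w 0 i) (y_B j).
  by rewrite !mxE => ->; apply: eq_bigr => a _; rewrite !mxE mulrC.
by rewrite -mul_vec_lin submxMl.
Qed.

Definition radialSpan : 'M[k]_(r, r * n) := \matrix_(i < r) mxvec (radialmx P (delta_mx 0 i)).

Lemma mul_radialSpan (y : 'rV[k]_r) : y *m radialSpan = mxvec (radialmx P y).
Proof.
rewrite mulmx_sum_row; under eq_bigr do rewrite rowK -linearZ.
rewrite -linear_sum; congr mxvec; apply/matrixP => i j.
rewrite !mxE summxE (bigD1 i) //= big1 => [|i' ne_i'i]; rewrite !mxE ?eqxx.
  by rewrite mul1r addr0.
by rewrite eq_sym (negbTE ne_i'i) mul0r mulr0.
Qed.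

Lemma radialSpan_free : (forall i, P i != 0) -> row_free radialSpan.
Proof.
move=> P_neq0; apply: inj_row_free => y; rewrite mul_radialSpan => /eqP; rewrite mxvec_eq0.
move=> /eqP y_P; apply/rowP => i; rewrite mxE; apply/eqP/contraT => yi_neq0.
have /eqP[] := P_neq0 i; apply/rowP => j; have /eqP := congr1 (fun M : 'M[k]_(r, n) => M i j) y_P.
by rewrite !mxE mulf_eq0 (negbTE yi_neq0) => /eqP.
Qed.

(* The radial matrices [diag(a) P] with [a] the values of a form of degree [d] are values
   of the [n]-tuple [a * 'X_j] of forms of degree [d.+1]: this gives [s0] dimensions in the
   intersection. *)
Lemma rank_evalSpan_radial d s1 s0 (B1 : 'M[k]_(s1, r)) :
  (forall i, P i != 0) ->
  (forall f, f \is d.+1.-homog -> (\row_j evalAt (P j) f <= B1)%MS) ->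
  imposes_conditions P d s0 ->
  (\rank (evalSpan n B1 + radialSpan)%MS + s0 <= s1 * n + r)%N.
Proof.
move=> P_neq0 B1_span [B0 [B0_free B0_rows _]].
have radial_sub : (B0 *m radialSpan <= evalSpan n B1)%MS.
  apply/row_subP => b; rewrite row_mul; have [h [h_d ->]] := B0_rows b.
  rewrite mul_radialSpan (_ : radialmx P _ = evalmx P (fun j => h * 'X_j)).
    by apply: (evalmx_sub_evalSpan B1_span) => j; rewrite -addn1 dhomogM // dhomogX /= mdeg1.
  by apply/matrixP => i j; rewrite !mxE evalAtM evalAtX.
have : (B0 *m radialSpan <= evalSpan n B1 :&: radialSpan)%MS.
  by rewrite sub_capmx radial_sub submxMl.
move/mxrankS; rewrite mxrankMfree ?radialSpan_free // (eqnP B0_free) => s0_le.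
have := mxrank_sum_cap (evalSpan n B1) radialSpan.
have := rank_leq_row (evalSpan n B1); have := rank_leq_row radialSpan; lia.
Qed.

End Spans.

Section ConeHom.
Variables (k : fieldType) (n r : nat) (P : 'I_r -> 'rV[k]_n) (l : nat).
Variable F : nat -> 'I_r -> {mpoly k[n]}.
Hypothesis F_homog : forall d i, F d i \is d.-homog.
Hypothesis F_interpolates : forall f, inConeIdeal P f -> forall q, pihomog mdeg q f != 0 ->
  forall i j, evalAt (P j) (F (q + l) i) = (i == j)%:R.
Implicit Types (W : 'M[k]_(r, n)) (f g a b : {mpoly k[n]}).

Definition coneHom W f : {mpoly k[n]} :=
  \sum_(q < msize f) \sum_(i < r)
     evalAt (P i) (dderiv (row i W) (pihomog mdeg q f)) *: F (q + l) i.

Lemma coneHom_eval W f t i : inConeIdeal P f ->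
  evalAt (t *: P i) (coneHom W f) = t ^+ l.+1 * evalAt (t *: P i) (dderiv (row i W) f).
Proof.
move=> If; rewrite {2}(pihomog_partitionE (leqnn (msize f))) dderiv_sum.
rewrite evalAt_sum mulr_sumr evalAt_sum; apply: eq_bigr => q _.
have [-> | fq_neq0] := eqVneq (pihomog mdeg q f) 0.
  by rewrite dderiv0 evalAt0 mulr0 big1 ?evalAt0 // => j _; rewrite dderiv0 evalAt0 scale0r.
rewrite evalAt_sum (bigD1 i) //= big1 ?addr0 => [|j ne_ji];
  rewrite evalAtZ (evalAt_homog _ _ (F_homog _ _)) (F_interpolates If fq_neq0).
  rewrite eqxx mulr1; case: q fq_neq0 => [[|q] lt_q] fq_neq0 /=.
    by rewrite dderiv_homog0 ?evalAt0 ?mulr0 ?mul0r // pihomogP.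
  rewrite (evalAt_homog _ _ (dderiv_homog _ (pihomogP _ _ _))) /= mulrA -exprD.
  by rewrite mulrC addnC addSnnS.
by rewrite (negbTE ne_ji) !mulr0.
Qed.

Lemma coneHom_isHomIO W : isHomIO P (coneHom W).
Proof.
move=> f g a b If Ig i t.
have Ifg : inConeIdeal P (a * f + b * g) by apply: inConeIdealD; apply: inConeIdealMl.
rewrite evalAtB evalAtD !evalAtM !coneHom_eval // !dderivD !dderivM !evalAtD !evalAtM.
rewrite (If i t) (Ig i t) !mulr0 !add0r.
by rewrite mulrDr [_ * (_ * _)]mulrCA [evalAt _ b * (_ * _)]mulrCA subrr.
Qed.

Lemma coneHom_homDeg W : homDeg P l (coneHom W).
Proof.
move=> q f If f_q; exists (coneHom W f); split; last by rewrite subrr; exact: inConeIdeal0.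
apply: rpred_sum => p _; apply: rpred_sum => i _.
have [-> | ne_pq] := eqVneq (p : nat) q; first exact/dhomogZ/F_homog.
by rewrite (pihomog_ne0 _ f_q) 1?eq_sym // dderiv0 evalAt0 scale0r dhomog0.
Qed.

Lemma coneHom_suml (I : finType) (c : I -> k) (W : I -> 'M[k]_(r, n)) f :
  \sum_j c j *: coneHom (W j) f = coneHom (\sum_j c j *: W j) f.
Proof.
rewrite /coneHom; under eq_bigr do rewrite scaler_sumr.
rewrite exchange_big; apply: eq_bigr => q _; under eq_bigr do rewrite scaler_sumr.
rewrite exchange_big; apply: eq_bigr => i _; under eq_bigr do rewrite scalerA.
have -> : row i (\sum_j c j *: W j) = \sum_j c j *: row i (W j).
  by apply/rowP => j'; rewrite !(mxE, summxE); apply: eq_bigr => j _; rewrite !mxE.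
rewrite -scaler_suml dderiv_suml evalAt_sum; congr (_ *: _).
by apply: eq_bigr => j _; rewrite evalAtZ.
Qed.

Lemma coneHom_derivApply_decomp W (g : 'I_n -> {mpoly k[n]}) :
  (forall i j, i != j -> forall c : k, P i != c *: P j) ->
  (forall f, inConeIdeal P f -> inConeIdeal P (coneHom W f - derivApply g f)) ->
  exists a : 'rV[k]_r, W = evalmx P g + radialmx P a.
Proof.
move=> distinct Wg.
have row_sub i : (row i W - row i (evalmx P g) <= P i)%MS.
  apply: sub_of_dderiv_vanishing => // f If.
  have := Wg f If i 1; rewrite evalAtB coneHom_eval // expr1n mul1r !scale1r.
  rewrite evalAt_derivApply dderivBl evalAtB => <-; congr (_ - evalAt _ (dderiv _ _)).
  by apply/rowP => j; rewrite !mxE.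
have /fin_all_exists[a a_P] : forall i, exists a : k, row i W - row i (evalmx P g) = a *: P i.
  by move=> i; apply/sub_rVP/row_sub.
exists (\row_i a i); apply/matrixP => i j.
have := congr1 (fun w : 'rV[k]_n => w 0 j) (a_P i).
by rewrite !mxE => <-; rewrite addrC subrK.
Qed.

Lemma T1_dim_ge_coneHom m s1 (B1 : 'M[k]_(s1, r)) (C : 'M[k]_(m, r * n)) :
  (forall i j, i != j -> forall c : k, P i != c *: P j) ->
  (forall f, f \is l.+1.-homog -> (\row_j evalAt (P j) f <= B1)%MS) ->
  row_free C -> (C <= (evalSpan n B1 + radialSpan P)^C)%MS -> T1_dim_ge P l m.
Proof.
move=> distinct B1_span C_free C_sub.
exists (fun j => coneHom (vec_mx (row j C))); split => [j | c g g_homog c_g].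
  by split; [apply: coneHom_isHomIO | apply: coneHom_homDeg].
pose V := \sum_j c j *: vec_mx (row j C).
have V_C : mxvec V = \row_j c j *m C.
  rewrite mulmx_sum_row linear_sum; apply: eq_bigr => j _.
  by rewrite linearZ /= vec_mxK mxE.
have [y V_eq] : exists y, V = evalmx P g + radialmx P y.
  apply: coneHom_derivApply_decomp => // f If.
  by rewrite /V -coneHom_suml; apply: c_g.
have V_U : (mxvec V <= evalSpan n B1 + radialSpan P)%MS.
  rewrite V_eq linearD /= addmx_sub_adds // -?mul_radialSpan ?submxMl //.
  by apply: evalmx_sub_evalSpan B1_span _ => j; rewrite -addn1.
have : (mxvec V <= (evalSpan n B1 + radialSpan P) :&: (evalSpan n B1 + radialSpan P)^C)%MS.
  by rewrite sub_capmx V_U V_C (submx_trans (submxMl _ _) C_sub).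
rewrite capmx_compl submx0 V_C mulmx_free_eq0 // => /eqP/rowP c0 j.
by have := c0 j; rewrite !mxE.
Qed.

End ConeHom.

Lemma T1_dimension_count (n r l m s1 s0 : nat) : (0 < l)%N -> (s1 <= 'C(n + l, l + 1))%N ->
  s0 = minn r 'C(n + l - 1, l) ->
  (m%:Z <= Num.max 0 ((n%:Z - 1) * (r%:Z - ('C(n + l, l + 1))%:Z)
                       - ('C(n + l - 1, l + 1))%:Z)) ->
  (m <= r * n + s0 - (s1 * n + r))%N.
Proof.
move=> l_gt0 s1_le -> m_le; have [-> // | m_gt0] := posnP m.
have {m_le} m_le : m%:Z <= (n%:Z - 1) * (r%:Z - ('C(n + l, l + 1))%:Z)
                            - ('C(n + l - 1, l + 1))%:Z.
  by move: m_le; rewrite le_max => /orP[|//]; lia.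
have pascal : 'C(n + l, l + 1) = ('C(n + l - 1, l) + 'C(n + l - 1, l + 1))%N.
  have n_l : (n + l = (n + l - 1).+1)%N by lia.
  by rewrite {1}n_l addn1 binS addnC.
rewrite pascal in m_le s1_le.
have C0_n0 : n = 0%N -> 'C(n + l - 1, l) = 0%N.
  by move=> ->; rewrite bin_small // add0n subn1 prednK.
move: m_le s1_le C0_n0; set C0 := 'C(_, l); set C2 := 'C(_, l + 1).
clearbody C0 C2; clear pascal.
case: n => [|[|n]] m_le s1_le C0_n0.
- by move: m_le m_gt0 (C0_n0 erefl); lia.
- by move: m_le m_gt0; lia.
have C_lt_r : (C0 + C2 < r)%N.
  by rewrite ltnNge; apply/negP => r_le; move: m_le m_gt0 r_le; nia.
rewrite (minn_idPr (ltnW (leq_ltn_trans (leq_addr C2 C0) C_lt_r))).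
by move: m_le s1_le; nia.
Qed.

Theorem mainTheorem7 (k : closedFieldType) (n r : nat) (P : 'I_r -> 'rV[k]_n)
  (l m : nat) :
  [pchar k] =i pred0 ->
  general_position P ->
  (0 < l)%N ->
  (m%:Z <= Num.max 0 ((n%:Z - 1) * (r%:Z - ('C(n + l, l + 1))%:Z)
                       - ('C(n + l - 1, l + 1))%:Z)) ->
  T1_dim_ge P l m.
Proof.
move=> char0 gen_pos l_gt0 m_le.
have [F [F_homog F_P]] := interpolating_family gen_pos.
have F_interpolates f : inConeIdeal P f -> forall q, pihomog mdeg q f != 0 ->
    forall i j, evalAt (P j) (F (q + l)%N i) = (i == j)%:R.
  move=> If q fq_neq0; apply: F_P; first by rewrite addn_gt0 l_gt0 orbT.
  exact: (ideal_component_bound gen_pos char0 l_gt0 If fq_neq0).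
case: (gen_pos) => P_neq0 distinct imposes.
have [B1 [_ _ B1_span]] := imposes l.+1 isT.
have s1_le : (minn r 'C(n + l.+1 - 1, l.+1) <= 'C(n + l, l + 1))%N.
  by rewrite addnS subn1 addn1 geq_minr.
have m_le_rank : (m <= \rank (evalSpan n B1 + radialSpan P)^C)%N.
  have := rank_evalSpan_radial P_neq0 B1_span (imposes l l_gt0).
  have := T1_dimension_count l_gt0 s1_le erefl m_le.
  by rewrite mxrank_compl; lia.
pose C : 'M[k]_(m, r * n) := pid_mx m *m row_base (evalSpan n B1 + radialSpan P)^C%MS.
have C_free : row_free C by rewrite /row_free mxrankMfree ?row_base_free // rank_pid_mx.
have C_sub : (C <= (evalSpan n B1 + radialSpan P)^C)%MS.
  by rewrite (submx_trans (submxMl _ _)) // eq_row_base.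
exact (T1_dim_ge_coneHom F_homog F_interpolates distinct B1_span C_free C_sub).
Qed.
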